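(* Let $\hat{\mathfrak{so}}$ be the extended Schr\''odinger-Virasoro algebra over $\mathbb{C}$ and, for $g\in\frac12\mathbb{Z}$, let $\Delta_g(\hat{\mathfrak{so}})$ be the space of $\frac12$-derivations of $\hat{\mathfrak{so}}$ of degree $g$. Then $\Delta_{j+\frac12}(\hat{\mathfrak{so}})=0$ for every $j\in\mathbb{Z}$.
   Context: The extended Schr\''odinger-Virasoro algebra $\hat{\mathfrak{so}}$ is the complex Lie algebra with basis $\{L_n,M_n,N_n,Y_{n+\frac12},C_L,C_{LN},C_N\mid n\in\mathbb{Z}\}$ and brackets (all others zero, $C_L,C_{LN},C_N$ central): $[L_m,L_n]=(n-m)L_{m+n}+\delta_{m+n,0}\frac{m^3-m}{12}C_L$, $[L_m,M_n]=nM_{m+n}$, $[L_m,N_n]=nN_{m+n}+\delta_{m+n,0}(m^2-m)C_{LN}$, $[N_m,M_n]=2M_{m+n}$, $[L_m,Y_{n+\frac12}]=(n+\frac{1-m}{2})Y_{m+n+\frac12}$, $[N_m,Y_{n+\frac12}]=Y_{m+n+\frac12}$, $[Y_{m+\frac12},Y_{n+\frac12}]=(m-n)M_{m+n+1}$, $[N_m,N_n]=n\delta_{m+n,0}C_N$, for all $m,n\in\mathbb{Z}$. It is $\frac12\mathbb{Z}$-graded by $\hat{\mathfrak{so}}_0=\langle L_0,M_0,N_0,C_L,C_{LN},C_N\rangle$, $\hat{\mathfrak{so}}_n=\langle L_n,M_n,N_n\rangle$ for $n\in\mathbb{Z}\setminus\{0\}$, $\hat{\mathfrak{so}}_{n+\frac12}=\langle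 Y_{n+\frac12}\rangle$. A $\frac12$-derivation of a Lie algebra $L$ is a linear map $\varphi:L\to L$ with $\varphi([x,y])=\frac12([\varphi(x),y]+[x,\varphi(y)])$ for all $x,y$. A $\frac12$-derivation $\varphi$ has degree $g$ if $\varphi(\hat{\mathfrak{so}}_h)\subseteq\hat{\mathfrak{so}}_{g+h}$ for all $h\in\frac12\mathbb{Z}$. *)

(* The extended Schroedinger-Virasoro algebra over C,
   where C := R[i] (real_closed's complex numbers) for R a realType
   (= the real numbers, unique up to isomorphism). *)
From HB Require Import structures.
From mathcomp Require Import all_boot all_order all_algebra.
From mathcomp Require Import finmap.
From mathcomp.multinomials Require Import monalg.
From mathcomp.real_closed Require Import complex.
From mathcomp Require Import reals.

Set Implicit Arguments.
Unset Strict Implicit.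
Unset Printing Implicit Defensive.

Import Order.TTheory GRing.Theory Num.Theory.
Local Open Scope ring_scope.

(* Basis index: sL n = L_n, sM n = M_n, sN n = N_n, sY n = Y_{n+1/2},
   sCL = C_L, sCLN = C_{LN}, sCN = C_N. *)
Inductive sidx :=
  | sL of int | sM of int | sN of int | sY of int | sCL | sCLN | sCN.

Definition sidx_enc (k : sidx) : nat * int :=
  match k with
  | sL n => (0%N, n) | sM n => (1%N, n) | sN n => (2%N, n) | sY n => (3%N, n)
  | sCL => (4%N, 0) | sCLN => (5%N, 0) | sCN => (6%N, 0)
  end.
Definition sidx_dec (p : nat * int) : option sidx :=
  match p with
  | (0, n) => Some (sL n) | (1, n) => Some (sM n) | (2, n) => Some (sN n)
  | (3, n) => Some (sY n) | (4, _) => Some sCL | (5, _) => Some sCLN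
  | (6, _) => Some sCN | _ => None
  end%N.
Lemma sidx_encK : pcancel sidx_enc sidx_dec. Proof. by case. Qed.
HB.instance Definition _ := Countable.copy sidx (pcan_type sidx_encK).

Definition SV (R : realType) := {malg (R[i])[sidx]}.

Section Bracket.
Variable R : realType.
Local Notation C := (R[i]).
Local Notation V := (SV R).
Local Notation e c k := (<< (c : C) *g k >> : V).
Local Notation zC z := ((z : int)%:~R : C).
Local Notation dlt m n := (((m + n == 0 :> int) : nat)%:R : C).

Definition br (a b : sidx) : V :=
  match a, b with
  | sL m, sL n => e (zC (n - m)) (sL (m + n))
                  + e (dlt m n * zC (m ^+ 3 - m) / 12%:R) sCL
  | sL m, sM n => e (zC n) (sM (m + n))
  | sM n, sL m => - e (zC n) (sM (m + n))
  | sL m, sN n => e (zC n) (sN (m + n)) + e (dlt m n * zC (m ^+ 2 - m)) sCLN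
  | sN n, sL m => - (e (zC n) (sN (m + n)) + e (dlt m n * zC (m ^+ 2 - m)) sCLN)
  | sN m, sM n => e 2%:R (sM (m + n))
  | sM n, sN m => - e 2%:R (sM (m + n))
  | sL m, sY n => e (zC n + zC (1 - m) / 2%:R) (sY (m + n))
  | sY n, sL m => - e (zC n + zC (1 - m) / 2%:R) (sY (m + n))
  | sN m, sY n => e 1 (sY (m + n))
  | sY n, sN m => - e 1 (sY (m + n))
  | sY m, sY n => e (zC (m - n)) (sM (m + n + 1))
  | sN m, sN n => e (zC n * dlt m n) sCN
  | _, _ => 0
  end.

Definition sbracket (x y : V) : V :=
  \sum_(a <- msupp x) \sum_(b <- msupp y) (x@_a * y@_b) *: br a b.

(* Twice the degree of a basis vector (degrees lie in (1/2)Z). *)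
Definition dg2 (k : sidx) : int :=
  match k with
  | sL n | sM n | sN n => 2 * n
  | sY n => 2 * n + 1
  | sCL | sCLN | sCN => 0
  end.

Definition in_grade (h2 : int) (x : V) : Prop :=
  forall k, k \in msupp x -> dg2 k = h2.

Definition half_derivation (phi : V -> V) : Prop :=
  forall x y, phi (sbracket x y) =
              (2%:R : C)^-1 *: (sbracket (phi x) y + sbracket x (phi y)).

Definition has_degree2 (g2 : int) (phi : V -> V) : Prop :=
  forall h2 x, in_grade h2 x -> in_grade (g2 + h2) (phi x).
End Bracket.

From HB Require Import structures.
From mathcomp Require Import all_boot all_order all_algebra.
From mathcomp Require Import finmap.
From mathcomp.multinomials Require Import monalg.
From mathcomp.real_closed Require Import complex.
From mathcomp Require Import reals.
From mathcomp Require Import zify ring.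
Import GRing.Theory Num.Theory.
Local Open Scope ring_scope.

(* ad N_0 acts diagonally on the basis, with weight 1 on the Y's, 2 on the
   M's and 0 elsewhere.  Since phi(N_0) lies in C Y_j, the 1/2-derivation
   identity for [N_0, Y_{j+1}] = Y_{j+1}, read off at M_{2j+2}, forces
   phi(N_0) = 0.  Then phi([N_0, b]) = 1/2 [N_0, phi(b)] compares weights:
   (2 wt(b) - wt(t)) phi(b)_t = 0.  As phi(b) is spanned by Y's for b not a Y,
   this kills phi(b); and phi(Y_{j+1}) must be a multiple of M_{2j+2}, which
   the identity for [L_0, Y_{j+1}] = (j + 3/2) Y_{j+1} kills as well.  Finally
   Y_n = [N_{n-j-1}, Y_{j+1}] gives phi(Y_n) = 0. *)

Lemma big_msupp_mcoeff1 {G : pzRingType} {K : choiceType} {w : {malg G[K]}}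
    {f : K -> G} (b0 : K) :
  (forall b, b != b0 -> w@_b * f b = 0) ->
  \sum_(b <- msupp w) w@_b * f b = w@_b0 * f b0.
Proof.
move=> off_b0; have [b0_in|b0_out] := boolP (b0 \in msupp w).
  by rewrite (bigD1_seq b0) //= big1 ?addr0.
rewrite (mcoeff_outdom b0_out) mul0r big1_seq // => b /andP[_ b_in].
by apply: off_b0; apply: contraNneq b0_out => <-.
Qed.

Section Bracket.
Variable R : realType.
Local Notation C := (R[i]).
Local Notation V := (SV R).

Lemma msuppU1 (k : sidx) : msupp (<< k >> : V) = [fset k]%fset.
Proof. by rewrite msuppU oner_eq0. Qed.

Lemma monalgU_scale (c : C) k : (<< c *g k >> : V) = c *: << k >>.
Proof. by apply/malgP => t; rewrite mcoeffZ !mcoeffU mulr_natr. Qed.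

Lemma sbracketUU a b : sbracket (<< a >> : V) << b >> = br R a b.
Proof.
rewrite /sbracket msuppU1 big_seq_fset1 msuppU1 big_seq_fset1.
by rewrite !mcoeffUU mulr1 scale1r.
Qed.

Lemma sbracket0l (y : V) : sbracket 0 y = 0.
Proof. by rewrite /sbracket msupp0 big_seq_fset0. Qed.

Lemma sbracket0r (y : V) : sbracket y 0 = 0.
Proof. by rewrite /sbracket big1 // => a _; rewrite msupp0 big_seq_fset0. Qed.

Lemma mcoeff_sbracketUl a (w : V) t :
  (sbracket << a >> w)@_t = \sum_(b <- msupp w) w@_b * (br R a b)@_t.
Proof.
rewrite /sbracket msuppU1 big_seq_fset1 raddf_sum /=; apply: eq_bigr => b _.
by rewrite mcoeffZ mcoeffUU mul1r.
Qed.

Lemma mcoeff_sbracketUr (w : V) b t :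
  (sbracket w << b >>)@_t = \sum_(a <- msupp w) w@_a * (br R a b)@_t.
Proof.
rewrite /sbracket raddf_sum /=; apply: eq_bigr => a _.
by rewrite msuppU1 big_seq_fset1 mcoeffZ mcoeffUU mulr1.
Qed.

Lemma in_gradeU (c : C) k : in_grade (dg2 k) (<< c *g k >> : V).
Proof.
move=> t; rewrite msuppU; case: eqP => _; first by rewrite in_fset0.
by rewrite in_fset1 => /eqP ->.
Qed.

Lemma dg2_oddP k n : dg2 k = 2 * n + 1 -> k = sY n.
Proof. by case: k => /= [m|m|m|m|||] e; try lia; congr sY; lia. Qed.

Lemma in_grade_odd_mcoeff {n} {v : V} {k} :
  in_grade (2 * n + 1) v -> k != sY n -> v@_k = 0.
Proof.
move=> v_gr k_nY; apply: mcoeff_outdom; apply: contra k_nY => /v_gr.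
by move/dg2_oddP ->.
Qed.

Lemma in_grade_odd_eq0 {n} {v : V} :
  in_grade (2 * n + 1) v -> v@_(sY n) = 0 -> v = 0.
Proof.
move=> v_gr vY0; apply/malgP => k; rewrite mcoeff0.
by have [->|] := eqVneq k (sY n); last exact: in_grade_odd_mcoeff.
Qed.

Definition weightN0 (b : sidx) : C :=
  match b with sM _ => 2%:R | sY _ => 1 | _ => 0 end.

Lemma brN0 b : br R (sN 0) b = weightN0 b *: (<< b >> : V).
Proof.
case: b => [m|m|m|m|||] /=; rewrite ?scale0r //.
- rewrite mulr0z monalgU0 add0r addr0.
  have [->|m_nz] := eqVneq m 0.
    by rewrite expr0n /= subr0 mulr0z mulr0 monalgU0 oppr0.
  by rewrite mul0r monalgU0 oppr0.
- by rewrite add0r monalgU_scale.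
- have [->|m_nz] := eqVneq m 0; first by rewrite mulr0z mul0r monalgU0.
  by rewrite add0r (negbTE m_nz) mulr0 monalgU0.
- by rewrite add0r scale1r.
Qed.

Lemma mcoeff_brN0 c t : (br R (sN 0) c)@_t = weightN0 t *+ (c == t).
Proof. by rewrite brN0 mcoeffZ mcoeffU mulr_natr; case: eqP => // ->. Qed.

Section HalfDerivation.
Variable j : int.
Variable phi : {linear V -> V}.
Hypothesis phi_half : half_derivation phi.
Hypothesis phi_deg : has_degree2 (2 * j + 1) phi.

Lemma mcoeff_phi_br a b t : (phi (br R a b))@_t = 2%:R^-1 *
  (\sum_(c <- msupp (phi << a >>)) (phi << a >>)@_c * (br R c b)@_t +
   \sum_(c <- msupp (phi << b >>)) (phi << b >>)@_c * (br R a c)@_t).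
Proof.
by rewrite -sbracketUU phi_half mcoeffZ mcoeffD mcoeff_sbracketUl
  mcoeff_sbracketUr.
Qed.

Lemma in_grade_phiU k : in_grade (2 * j + 1 + dg2 k) (phi << k >>).
Proof. exact/phi_deg/in_gradeU. Qed.

Lemma phiN0 : phi << sN 0 >> = 0.
Proof.
have phiN0_gr : in_grade (2 * j + 1) (phi << sN 0 >>).
  by rewrite -[2 * j + 1]addr0; apply: in_grade_phiU.
set v := (phi << sN 0 >>)@_(sY j).
set w := (phi << sY (j + 1) >>)@_(sM (2 * j + 2)).
have brYY : (br R (sY j) (sY (j + 1)))@_(sM (2 * j + 2)) = -1.
  rewrite /= (_ : j + (j + 1) + 1 = 2 * j + 2); last by ring.
  by rewrite mcoeffUU (_ : j - (j + 1) = -1) //; ring.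
have key := mcoeff_phi_br (sN 0) (sY (j + 1)) (sM (2 * j + 2)).
rewrite brN0 scale1r -/w in key.
rewrite (big_msupp_mcoeff1 (sY j)) ?brYY in key; last first.
  by move=> c c_nY; rewrite (in_grade_odd_mcoeff phiN0_gr c_nY) mul0r.
rewrite (big_msupp_mcoeff1 (sM (2 * j + 2))) ?mcoeff_brN0 ?eqxx -/w
  in key; last by move=> c /negbTE c_ne; rewrite mcoeff_brN0 c_ne mulr0.
apply: (in_grade_odd_eq0 phiN0_gr); rewrite -/v.
have : v = 2%:R * w - 2%:R * (2%:R^-1 * (v * (-1) + w * 2%:R)) by field.
by rewrite -key subrr.
Qed.

Lemma weight_mcoeff_phi b t :
  (2%:R * weightN0 b - weightN0 t) * (phi << b >>)@_t = 0.
Proof.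
have key := mcoeff_phi_br (sN 0) b t.
rewrite brN0 linearZ mcoeffZ phiN0 msupp0 big_seq_fset0 add0r in key.
rewrite (big_msupp_mcoeff1 t) ?mcoeff_brN0 ?eqxx in key; last first.
  by move=> c /negbTE c_ne; rewrite mcoeff_brN0 c_ne mulr0.
by rewrite mulrBl -mulrA key mulrA mulfV ?pnatr_eq0 // mul1r mulrC subrr.
Qed.

Lemma phi_nonY b : (forall m, b <> sY m) -> phi << b >> = 0.
Proof.
move=> b_nY; have [n dg_b] : exists n, 2 * j + 1 + dg2 b = 2 * n + 1.
  case: b b_nY => [m|m|m|m|||] b_nY /=;
    first [by case: (b_nY m) | by exists (j + m); ring | by exists j; ring].
have phib_gr := in_grade_phiU b; rewrite dg_b in phib_gr.
apply: (in_grade_odd_eq0 phib_gr); apply/eqP.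
have /eqP := weight_mcoeff_phi b (sY n); rewrite mulf_eq0 => /orP[|//].
case: b b_nY {dg_b phib_gr} => [m|m|m|m|||] b_nY /=; try by case: (b_nY m).
all: rewrite ?mulr0 ?sub0r ?oppr_eq0 ?oner_eq0 //.
by rewrite (_ : 2%:R * 2%:R - 1 = 3%:R :> C) ?pnatr_eq0 //; ring.
Qed.

Lemma phiY_succ : phi << sY (j + 1) >> = 0.
Proof.
set w := phi << sY (j + 1) >>.
have w_supp t : t != sM (2 * j + 2) -> w@_t = 0.
  move=> t_nM; apply: mcoeff_outdom; apply: contra t_nM => t_in.
  have t_gr := in_grade_phiU (sY (j + 1)) t t_in.
  have /eqP := weight_mcoeff_phi (sY (j + 1)) t.
  rewrite mulf_eq0 mcoeff_eq0 t_in orbF /= mulr1 subr_eq0.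
  case: t {t_in} t_gr => [m|m|m|m|||] /= t_gr; rewrite ?pnatr_eq0 ?pnatr_eq1 //.
  by move=> _; apply/eqP; congr sM; lia.
set x := w@_(sM (2 * j + 2)).
have key := mcoeff_phi_br (sL 0) (sY (j + 1)) (sM (2 * j + 2)).
rewrite /= add0r monalgU_scale linearZ mcoeffZ -/w -/x in key.
rewrite (phi_nonY (sL 0)) // msupp0 big_seq_fset0 add0r in key.
rewrite (big_msupp_mcoeff1 (sM (2 * j + 2))) -/x in key; last first.
  by move=> c /w_supp ->; rewrite mul0r.
rewrite /= add0r mcoeffUU subr0 !intrD intrM in key.
have x0 : x = 0.
  have : x = 2%:R * ((j%:~R + 1 + 1 / 2%:R) * x
                     - 2%:R^-1 * (x * (2%:R * j%:~R + 2%:R))) by field.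
  by rewrite key subrr mulr0.
apply/malgP => t; rewrite mcoeff0.
by have [->|/w_supp //] := eqVneq t (sM (2 * j + 2)); exact: x0.
Qed.

Lemma phiY n : phi << sY n >> = 0.
Proof.
have := phi_half << sN (n - j - 1) >> << sY (j + 1) >>.
rewrite sbracketUU /= (_ : n - j - 1 + (j + 1) = n); last by ring.
by rewrite phiY_succ (phi_nonY (sN _)) // sbracket0l sbracket0r addr0 scaler0.
Qed.

Lemma phiU k : phi << k >> = 0.
Proof. by case: k => [m|m|m|m|||]; rewrite ?phiY // phi_nonY. Qed.

End HalfDerivation.
End Bracket.

Theorem mainTheorem2 (R : realType) (j : int) (phi : {linear SV R -> SV R}) :
  half_derivation phi -> has_degree2 (2 * j + 1) phi -> forall x, phi x = 0.
Proof.
move=> phi_half phi_deg x; rewrite (monalgE x) linear_sum big1 // => k _.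
rewrite monalgU_scale linearZ (phiU _ _ _ phi_half phi_deg k); exact: scaler0.
Qed.
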